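(* Let $T>0$ and let $y:[0,T]\to[0,+\infty)$ be continuous. Assume there exists $k\ge0$ such that $$y(t)\le k\int_0^t\frac{1}{s\sqrt{s}}\int_0^s y(\sigma)\,d\sigma\,ds\qquad\text{for every }t\in[0,T].$$ Then $y(t)=0$ for every $t\in[0,T]$. *)

From HB Require Import structures.
From mathcomp Require Export all_boot all_order all_algebra.
From mathcomp Require Export all_classical all_reals all_analysis.
Set Implicit Arguments.
Unset Strict Implicit.
Unset Printing Implicit Defensive.

From mathcomp Require Import all_boot all_order all_algebra.
From mathcomp Require Import all_classical all_reals all_analysis.
From mathcomp Require Import ring lra measurable_realfun.
Import Order.TTheory GRing.Theory Num.Theory numFieldNormedType.Exports.
Local Open Scope classical_set_scope.
Local Open Scope ring_scope.

(* Suppose [y = 0] on [[0, a[] and let [m] be the maximum of [y] on [[a, b]],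
   where [b - a <= d].  Then [int_0^s y <= m (s - a)] for [s] in [[a, b]], so
   the double integral up to any [c] in [[a, b]] is at most
   [m int_a^c s^(-1/2) ds <= 2 m sqrt d].  The hypothesis at a maximiser gives
   [m <= 2 k m sqrt d <= m / 2] for small [d], hence [m = 0]: the zeros of [y]
   advance by [d] at each step and exhaust [[0, T]]. *)

(* Unlike [ge0_le_integral], no measurability is required: the integral of a
   nonnegative function is a supremum over the simple functions below it. *)
Lemma ge0_le_integral_nomeas d (X : measurableType d) (R : realType)
    (mu : {measure set X -> \bar R}) (D : set X) (f g : X -> \bar R) :
  (forall x, D x -> (0 <= f x)%E) -> (forall x, D x -> (f x <= g x)%E) ->
  (\int[mu]_(x in D) f x <= \int[mu]_(x in D) g x)%E.
Proof.
move=> f0 fg.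
have g0 x : D x -> (0 <= g x)%E by move=> Dx; exact: le_trans (f0 x Dx) (fg x Dx).
rewrite ge0_integralE // [leRHS]ge0_integralE //.
apply: ereal_sup_le => _ [h hf <-]; exists h => //= x.
apply: le_trans (hf x) _; rewrite /patch; case: ifP => // /[!inE].
exact: fg.
Qed.

Section integral_inv_sqrt.
Context {R : realType}.
Local Notation mu := (@lebesgue_measure R).

Lemma sub_sqrtr_le_sqrtrB (a t : R) : 0 <= a -> a <= t ->
  Num.sqrt t - Num.sqrt a <= Num.sqrt (t - a).
Proof.
move=> a0 at_; rewrite lerBlDl.
have sa0 := sqrtr_ge0 a; have sta0 := sqrtr_ge0 (t - a).
have : t <= (Num.sqrt a + Num.sqrt (t - a)) ^+ 2.
  rewrite sqrrD !sqr_sqrtr ?subr_ge0 //.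
  have : 0 <= Num.sqrt a * Num.sqrt (t - a) by exact: mulr_ge0.
  lra.
move=> /ler_wsqrtr; rewrite sqrtr_sqr ger0_norm //; exact: addr_ge0.
Qed.

Definition inv_sqrt (x : R) := (Num.sqrt x)^-1.

Lemma inv_sqrt_ge0 x : 0 <= inv_sqrt x.
Proof. by rewrite invr_ge0 sqrtr_ge0. Qed.

Lemma inv_sqrt_continuous x : 0 < x -> {for x, continuous inv_sqrt}.
Proof.
move=> x0; apply: continuousV; first by rewrite gt_eqF // sqrtr_gt0.
exact: sqrt_continuous.
Qed.

Lemma measurable_inv_sqrt (A : set R) :
  A `<=` `]0, +oo[%classic -> measurable_fun A inv_sqrt.
Proof.
move=> A0; apply: (measurable_funS _ A0) => //.
apply: open_continuous_measurable_fun; first exact: interval_open.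
by move=> x; rewrite inE /= in_itv /= andbT; exact: inv_sqrt_continuous.
Qed.

Lemma integral_inv_sqrt (e t : R) : 0 < e -> e < t ->
  (\int[mu]_(x in `[e, t]) (inv_sqrt x)%:E
     = (2 * Num.sqrt t)%:E - (2 * Num.sqrt e)%:E)%E.
Proof.
move=> e0 et.
have dF (x : R) : 0 < x -> is_derive x 1 ((2:R) \*: (@Num.sqrt R)) (inv_sqrt x).
  move=> x0; apply: is_derive_eq; first exact/is_deriveZ/is_derive1_sqrt.
  by rewrite /inv_sqrt invfM scalerA mulfV ?scale1r.
have cF : continuous ((2:R) \*: (@Num.sqrt R)).
  by move=> x; apply: continuousZl_tmp; exact: sqrt_continuous.
apply: (continuous_FTC2 (F := (2:R) \*: (@Num.sqrt R))) => //.
- apply: continuous_in_subspaceT => x; rewrite inE /= in_itv /= => /andP[ex _].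
  exact: inv_sqrt_continuous (lt_le_trans e0 ex).
- split; [|exact: cvg_at_right_filter (cF e)|exact: cvg_at_left_filter (cF t)].
  by move=> x; rewrite in_itv /= => /andP[ex _]; have [] := dF x (lt_trans e0 ex).
- move=> x; rewrite in_itv /= => /andP[ex _].
  by rewrite derive1E; apply: derive_val; exact: dF (lt_trans e0 ex).
Qed.

(* [inv_sqrt] is unbounded near [0], so FTC is applied on the closed intervals
   [[a + (t - a)/(n + 2), t]] exhausting []a, t]] and combined with monotone
   convergence. *)
Lemma integral_inv_sqrt_itvoc_le (a t : R) : 0 <= a -> a <= t ->
  (\int[mu]_(x in `]a, t]) (inv_sqrt x)%:E <= (2 * Num.sqrt (t - a))%:E)%E.
Proof.
move=> a0; rewrite le_eqVlt => /predU1P[<-|at_].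
  by rewrite set_itvoc0 integral_set0 lee_fin mulr_ge0 // sqrtr_ge0.
have ta0 : 0 < t - a by rewrite subr_gt0.
pose e (n : nat) := a + (t - a) / n.+2%:R.
have ae n : a < e n by rewrite ltrDl divr_gt0.
have et n : e n < t by rewrite -ltrBrDl ltr_pdivrMr // ltr_pMr // ltr1n.
pose F n := `[e n, t]%classic.
have F_nd : nondecreasing_seq F.
  move=> n m nm; rewrite subsetEset => x; rewrite /F /= !in_itv /= andbC.
  move=> /andP[-> ex]; rewrite andbT; apply: le_trans ex.
  by rewrite lerD2l ler_pM2l // lef_pV2 ?posrE // ler_nat ltnS.
have F_cup : \bigcup_n F n = `]a, t]%classic.
  apply/seteqP; split => x.
    by move=> [n _]; rewrite /F /= !in_itv /= => /andP[/(lt_le_trans (ae n)) -> ->].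
  rewrite /= in_itv /= => /andP[ax xt].
  exists (Num.truncn ((t - a) / (x - a))) => //; rewrite /F /= in_itv /= xt andbT.
  rewrite -lerBrDl ler_pdivrMr // mulrC -ler_pdivrMr ?subr_gt0 //.
  by apply/ltW/(lt_trans (truncnS_gt _)); rewrite ltr_nat.
have e0 n : 0 < e n := le_lt_trans a0 (ae n).
have mf n : measurable_fun (F n) (fun x => (inv_sqrt x)%:E).
  apply/measurable_EFinP; apply: measurable_inv_sqrt => x /=.
  by rewrite !in_itv /= andbT => /andP[/(lt_le_trans (e0 n))].
have := ge0_nondecreasing_set_cvg_integral (mu := mu) F_nd (fun n => measurable_itv _) mf
  (fun n x _ => inv_sqrt_ge0 x : (0 <= (inv_sqrt x)%:E)%E).
rewrite F_cup => /cvge_to_le; apply; apply: nearW => n.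
rewrite integral_inv_sqrt // -EFinB lee_fin -mulrBr ler_pM2l //.
apply: le_trans (sub_sqrtr_le_sqrtrB _ _ (ltW (e0 n)) (ltW (et n))) _.
by rewrite ler_sqrt ?subr_ge0 ?(ltW at_) // lerB // ltW.
Qed.

End integral_inv_sqrt.

Section integral_bounds.
Context {R : realType}.
Local Notation mu := (@lebesgue_measure R).

Lemma integral_le_vanishing_prefix (f : R -> R) (a s m : R) :
  0 <= a -> a <= s ->
  (forall u, 0 <= u <= s -> 0 <= f u) ->
  (forall u, 0 <= u < a -> f u = 0) ->
  (forall u, a <= u <= s -> f u <= m) ->
  (\int[mu]_(u in `[0%R, s]) (f u)%:E <= (m * (s - a))%:E)%E.
Proof.
move=> a0 a_s f0 f_vanish f_le.
pose g := cst m%:E \_ `[a, s]%classic.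
apply: le_trans (@ge0_le_integral_nomeas _ _ _ mu _ _ g _ _) _.
- by move=> u /=; rewrite in_itv /= => u0s; rewrite lee_fin f0.
- move=> u /=; rewrite in_itv /= => /andP[u0 us]; rewrite /g patchE.
  case: ifPn => [|/negP]; rewrite inE /= in_itv /= us andbT.
    by move=> au; rewrite lee_fin f_le ?au.
  by move=> /negP; rewrite -ltNge => ua; rewrite f_vanish ?u0.
rewrite -integral_mkcondr setIidr; last first.
  by move=> u /=; rewrite !in_itv /= => /andP[au ->]; rewrite (le_trans a0 au).
rewrite integral_cst; last exact: measurable_itv.
set M := (X in (_ * X <= _)%E).
have -> : M = (s - a)%:E.
  transitivity (mu (`[a, s]%classic : set R)); first by [].
  rewrite lebesgue_measure_itv /= lte_fin -EFinD.
  by case: ltgtP a_s => // ->; rewrite subrr.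
exact: le_refl.
Qed.

Lemma integral_weighted_le_vanishing_prefix (f : R -> R) (a c m : R) :
  0 <= a -> a <= c ->
  (forall u, 0 <= u <= c -> 0 <= f u) ->
  (forall u, 0 <= u < a -> f u = 0) ->
  (forall u, a <= u <= c -> f u <= m) ->
  (\int[mu]_(s in `[0%R, c])
     (((s * Num.sqrt s)^-1)%:E * \int[mu]_(u in `[0%R, s]) (f u)%:E)
   <= (m * (2 * Num.sqrt (c - a)))%:E)%E.
Proof.
move=> a0 ac f0 f_vanish f_le.
have f_le_m u : 0 <= u <= c -> f u <= m.
  move=> /andP[u0 uc]; have [ua|au] := ltP u a; last by rewrite f_le ?au.
  by rewrite f_vanish ?u0 // (le_trans (f0 c _) (f_le c _)) ?lexx ?ac ?(le_trans a0).
have m0 : 0 <= m by apply: le_trans (f0 c _) (f_le_m c _); rewrite lexx (le_trans a0).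
pose g s := (m%:E * (inv_sqrt s)%:E)%E.
apply: le_trans (@ge0_le_integral_nomeas _ _ _ mu _ _ (g \_ `]a, c]%classic) _ _) _.
- move=> s /=; rewrite in_itv /= => /andP[s0 sc].
  rewrite mule_ge0 ?lee_fin ?invr_ge0 ?mulr_ge0 ?sqrtr_ge0 //.
  apply: integral_ge0 => u; rewrite /= in_itv /= => /andP[u0 us].
  by rewrite lee_fin f0 ?u0 ?(le_trans us).
- move=> s /=; rewrite in_itv /= => /andP[s0 sc].
  have ws0 : (0 <= ((s * Num.sqrt s)^-1)%:E)%E.
    by rewrite lee_fin invr_ge0 mulr_ge0 ?sqrtr_ge0.
  have f0s u : 0 <= u <= s -> 0 <= f u.
    by move=> /andP[u0 us]; rewrite f0 ?u0 ?(le_trans us).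
  rewrite patchE; case: ifPn => [|/negP]; rewrite inE /= in_itv /= sc andbT; last first.
    move=> /negP; rewrite -leNgt => sa.
    rewrite [X in (_ <= X)%E](_ : _ = 0%E) //.
    have := integral_le_vanishing_prefix f s s m s0 (lexx s) f0s.
    move=> /(_ _ _)/(lee_wpmul2l ws0)/le_trans; apply.
    - by move=> u /andP[u0 us]; rewrite f_vanish ?u0 ?(lt_le_trans us).
    - by move=> u /andP[su us]; rewrite f_le_m // (le_trans s0 su) (le_trans us).
    by rewrite (subrr s) mulr0 mule0.
  move=> a_s.
  have := integral_le_vanishing_prefix f a s m a0 (ltW a_s) f0s.
  move=> /(_ _ _)/(lee_wpmul2l ws0)/le_trans; apply.
  - by move=> u /andP[u0 ua]; rewrite f_vanish ?u0.
  - by move=> u /andP[au us]; rewrite f_le ?au ?(le_trans us).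
  have s_gt0 : 0 < s := le_lt_trans a0 a_s.
  rewrite -!EFinM lee_fin /inv_sqrt.
  have -> : m * (Num.sqrt s)^-1 = (s * Num.sqrt s)^-1 * (m * s).
    by field; rewrite !gt_eqF ?sqrtr_gt0.
  by rewrite ler_wpM2l ?invr_ge0 ?mulr_ge0 ?sqrtr_ge0 // ler_wpM2l // gerBl.
rewrite -integral_mkcondr setIidr; last first.
  by move=> u /=; rewrite !in_itv /= => /andP[/(le_lt_trans a0)/ltW -> ->].
rewrite ge0_integralZl_EFin //; last 2 first.
- by move=> x _; rewrite lee_fin inv_sqrt_ge0.
- apply/measurable_EFinP; apply: measurable_inv_sqrt => x /=.
  by rewrite !in_itv /= andbT => /andP[/(le_lt_trans a0)].
by rewrite EFinM lee_wpmul2l ?lee_fin // integral_inv_sqrt_itvoc_le.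
Qed.

End integral_bounds.

Section volterra.
Variables (R : realType) (T k : R) (y : R -> R).
Hypothesis y_cont : {within `[0, T]%classic, continuous y}.
Hypothesis y_ge0 : forall t, t \in `[0, T] -> 0 <= y t.
Hypothesis k_ge0 : 0 <= k.
Hypothesis y_le : forall t, t \in `[0, T] ->
  ((y t)%:E <= k%:E *
     \int[lebesgue_measure]_(s in `[0%R, t]%classic)
        (((s * Num.sqrt s)^-1)%:E *
         \int[lebesgue_measure]_(u in `[0%R, s]%classic) (y u)%:E))%E.

(* [r] is chosen so that [2 k r <= 1/2]; the step [r^2] is then the [d] of
   the proof idea. *)
Let r := (4 * (k + 1))^-1.
Let step := r ^+ 2.

Let k1_gt0 : 0 < k + 1.
Proof. exact: ltr_wpDl k_ge0 ltr01. Qed.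

Let r_gt0 : 0 < r.
Proof. by rewrite invr_gt0 mulr_gt0. Qed.

Let step_gt0 : 0 < step.
Proof. exact: exprn_gt0. Qed.

Let k_r_le : k * (2 * r) <= 2^-1.
Proof.
have -> : k * (2 * r) = 2^-1 - 2^-1 * (k + 1)^-1.
  by rewrite /r; field; rewrite gt_eqF.
by rewrite gerBl mulr_ge0 // invr_ge0 ltW.
Qed.

Definition vanishes_before (a : R) := forall u, 0 <= u < a -> u <= T -> y u = 0.

Lemma vanishes_before_step a : 0 <= a -> vanishes_before a -> vanishes_before (a + step).
Proof.
move=> a0 ya u /andP[u0 u_lt] uT.
have [Ta|aT] := ltP T a; first by apply: ya; rewrite ?u0 ?(le_lt_trans uT).
pose b := Num.min (a + step) T.
have ab : a <= b by rewrite le_min aT lerDl ltW.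
have cy : {within `[a, b]%classic, continuous y}.
  apply: continuous_subspaceW y_cont => v /=; rewrite !in_itv /= => /andP[av vb].
  by rewrite (le_trans a0 av) (le_trans vb) // ge_min lexx orbT.
have [c /[dup] cab] := EVT_max ab cy; rewrite in_itv /= => /andP[ac cb] cmax.
have bT : b <= T by rewrite ge_min lexx orbT.
have inT v : 0 <= v <= T -> v \in `[0, T] by rewrite in_itv.
have yc_le : y c <= k * (y c * (2 * Num.sqrt (c - a))).
  rewrite -lee_fin EFinM; apply: le_trans (y_le c _) _.
    by rewrite inT ?(le_trans a0 ac) ?(le_trans cb bT).
  apply: lee_wpmul2l; first by rewrite lee_fin.
  apply: integral_weighted_le_vanishing_prefix => // v /andP[v0 v_le].
  - by rewrite y_ge0 // inT ?v0 ?(le_trans v_le) ?(le_trans cb bT).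
  - by rewrite ya ?v0 // ltW ?(lt_le_trans v_le).
  - by rewrite cmax // in_itv /= v0 (le_trans v_le cb).
have sqrt_le_r : Num.sqrt (c - a) <= r.
  rewrite -(ger0_norm (ltW r_gt0)) -sqrtr_sqr ler_sqrt ?sqr_ge0 //.
  by rewrite lerBlDl (le_trans cb) // ge_min lexx.
have yc0 : y c <= 0.
  have yc_ge0 : 0 <= y c by rewrite y_ge0 ?inT ?(le_trans a0 ac) ?(le_trans cb bT).
  have : k * (y c * (2 * Num.sqrt (c - a))) <= y c * 2^-1.
    rewrite mulrCA ler_wpM2l //; apply: le_trans k_r_le.
    by rewrite ler_wpM2l // ler_wpM2l.
  lra.
have [ua|au] := ltP u a; first by rewrite ya ?u0.
apply/le_anti; rewrite y_ge0 ?inT ?u0 // andbT (le_trans _ yc0) // cmax //.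
by rewrite in_itv /= au le_min ltW.
Qed.

Lemma vanishes_before_iter n : vanishes_before (n%:R * step).
Proof.
elim: n => [|n IHn].
  by move=> u; rewrite mul0r => /andP[/le_lt_trans/[apply]]; rewrite ltxx.
rewrite -natr1 mulrDl mul1r; apply: vanishes_before_step => //.
by rewrite mulr_ge0 // ltW.
Qed.

Lemma vanishes_on_itv t : t \in `[0, T] -> y t = 0.
Proof.
rewrite in_itv /= => /andP[t0 tT].
apply: (vanishes_before_iter (Num.truncn (T / step)).+1) => //.
rewrite t0 /= (le_lt_trans tT) // -ltr_pdivrMr //.
exact: truncnS_gt.
Qed.

End volterra.

Theorem lemma3p3 (R : realType) (T : R) (y : R -> R) (k : R) :
  0 < T ->
  {within `[0, T]%classic, continuous y} ->
  (forall t, t \in `[0, T] -> 0 <= y t) ->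
  0 <= k ->
  (forall t, t \in `[0, T] ->
     ((y t)%:E <= k%:E *
       \int[lebesgue_measure]_(s in `[0%R, t]%classic)
          (((s * Num.sqrt s)^-1)%:E *
           \int[lebesgue_measure]_(u in `[0%R, s]%classic) (y u)%:E))%E) ->
  forall t, t \in `[0, T] -> y t = 0.
Proof.
by move=> _ y_cont y_ge0 k_ge0 y_le; exact: (@vanishes_on_itv R T k y y_cont y_ge0 k_ge0 y_le).
Qed.
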